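(* Let $k,n$ be positive integers. The total number of blocks, summed over all $\pi\in NC^k(n)$, equals $\binom{n(k+1)-1}{nk}$.
   Context: A partition $\pi$ of $[N]=\{1,\dots,N\}$ is non-crossing if there are no $1\le a<b<c<d\le N$ with $a,c$ in one block and $b,d$ in another. $NC^k(n)$ is the set of non-crossing partitions of $[kn]$ all of whose blocks have size divisible by $k$. *)

From mathcomp Require Import all_boot.
Set Implicit Arguments. Unset Strict Implicit. Unset Printing Implicit Defensive.

(* The ground set [N] = {1,..,N} is modelled by 'I_N = {0,..,N-1} with its
   natural order (an order-preserving relabelling). *)

Definition noncrossing (N : nat) (P : {set {set 'I_N}}) : bool :=
  [forall B in P, forall B' in P, (B != B') ==>
    [forall a : 'I_N, forall b : 'I_N, forall c : 'I_N, forall d : 'I_N,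
      [&& a < b, b < c & c < d] ==>
        ~~ [&& a \in B, c \in B, b \in B' & d \in B']]].

Definition NCk (k n : nat) (P : {set {set 'I_(k * n)}}) : bool :=
  [&& partition P [set: 'I_(k * n)], noncrossing P &
      [forall B in P, k %| #|B|]].

From mathcomp Require Import all_boot zify.
Set Implicit Arguments. Unset Strict Implicit. Unset Printing Implicit Defensive.

(* Record a partition of [0, N) by the sequence t whose entry at the least element
   of each block is the size of that block, all other entries being 0. For a
   noncrossing partition the block of y starts at the largest p <= y with
   t_p + ... + t_y >= y + 1 - p, so the partition can be recovered from t; the
   sequences arising are exactly those with t_0 + ... + t_(x-1) >= x for x <= N and
   total N (Lukasiewicz words), and the number of blocks is the number of nonzero
   entries. Padded by a final 0, such words have length N + 1 and sum N, and by the
   cycle lemma exactly one rotation of any such word is Lukasiewicz. Rotating the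
   marked entry to the front therefore matches Lukasiewicz words with a marked nonzero
   entry with words of sum N and nonzero first entry. When all entries are divisible
   by k these are the words k (w + e_0) for compositions w of n - 1 into N + 1 parts,
   and there are C(N + n - 1, N) of them. *)

Lemma card_ord_itv (N a b : nat) : a <= b <= N -> #|[set z : 'I_N | a <= z < b]| = b - a.
Proof.
case/andP=> ab bN; have lt i : i < b - a -> a + i < N by lia.
pose f (i : 'I_(b - a)) : 'I_N := Ordinal (lt i (ltn_ord i)).
have -> : [set z : 'I_N | a <= z < b] = f @: 'I_(b - a).
  apply/setP=> z; rewrite inE; apply/idP/imsetP => [/andP[az zb] | [i _ ->] /=].
    have zi : z - a < b - a by lia.
    by exists (Ordinal zi) => //; apply: val_inj => /=; lia.
  by rewrite leq_addr /=; have := ltn_ord i; lia.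
by rewrite card_imset ?card_ord // => i j [/addnI /val_inj].
Qed.

Lemma card_ord_lt (N x : nat) : x <= N -> #|[set z : 'I_N | z < x]| = x.
Proof.
by move=> xN; rewrite -[RHS]subn0 -(@card_ord_itv N) ?xN //; apply: eq_card => z; rewrite !inE.
Qed.

Lemma card_in_inj_leq (T : finType) (A : {pred T}) (f : T -> nat) (m : nat) :
  {in A &, injective f} -> {in A, forall x, f x < m} -> #|A| <= m.
Proof.
move=> finj fm; rewrite cardE -(size_map f) -(size_iota 0 m).
apply: uniq_leq_size => [|_ /mapP[x xA ->]].
  by rewrite map_inj_in_uniq ?enum_uniq // => x y; rewrite !mem_enum; apply: finj.
by rewrite mem_iota add0n fm // -mem_enum.
Qed.

Lemma modn_subn (M a : nat) : M <= a < M + M -> a %% M = a - M.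
Proof. by case/andP=> Ma aM; rewrite -{1}(subnK Ma) modnDr modn_small //; lia. Qed.

Lemma modn_compl (d a : nat) : a < d -> (d - a) %% d = if a == 0 then 0 else d - a.
Proof.
move=> ad; case: eqP => [-> | a0]; first by rewrite subn0 modnn.
by rewrite modn_small //; lia.
Qed.

Lemma sum_eq_ord0 (m : nat) : \sum_(j < m.+1) (j == ord0 : nat) = 1.
Proof. by rewrite (bigD1 ord0) //= big1 // => j /negbTE ->. Qed.

Section BlockMin.
Variables (N : nat) (P : {set {set 'I_N}}).

Definition block_min (y : 'I_N) : 'I_N := [arg min_(z < y in pblock P y) val z].

Hypothesis partP : partition P [set: 'I_N].

Lemma trivIset_part : trivIset P.
Proof. by case/and3P: partP. Qed.

Lemma mem_cover_part (y : 'I_N) : y \in cover P.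
Proof. by case/and3P: partP => /eqP -> _ _; rewrite inE. Qed.

Lemma mem_pblock_self (y : 'I_N) : y \in pblock P y.
Proof. by rewrite mem_pblock mem_cover_part. Qed.

Lemma pblock_imset : [set pblock P y | y in [set: 'I_N]] = P.
Proof.
apply/setP=> B; apply/imsetP/idP => [[y _ ->] | BP].
  exact/pblock_mem/mem_cover_part.
have /set0Pn[y yB] : B != set0 by apply: contraTneq BP => ->; case/and3P: partP.
by exists y; rewrite ?inE ?(def_pblock trivIset_part BP yB).
Qed.

Lemma block_min_mem (y : 'I_N) : block_min y \in pblock P y.
Proof. by rewrite /block_min; case: arg_minnP => //; apply: mem_pblock_self. Qed.

Lemma block_min_leq (y z : 'I_N) : z \in pblock P y -> block_min y <= z.
Proof.
by rewrite /block_min; case: arg_minnP => [|w _ wmin]; [apply: mem_pblock_self | apply: wmin].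
Qed.

Lemma block_min_leq_self (y : 'I_N) : block_min y <= y.
Proof. exact/block_min_leq/mem_pblock_self. Qed.

Lemma block_min_eq (y z : 'I_N) : z \in pblock P y -> block_min z = block_min y.
Proof.
move=> zy; have eq_pb := same_pblock trivIset_part zy.
apply/val_inj/eqP; rewrite eqn_leq !block_min_leq //; first by rewrite -eq_pb block_min_mem.
by rewrite eq_pb block_min_mem.
Qed.

Lemma block_min_idem (y : 'I_N) : block_min (block_min y) = block_min y.
Proof. exact/block_min_eq/block_min_mem. Qed.

Lemma mem_pblock_min (y z : 'I_N) : (z \in pblock P y) = (block_min z == block_min y).
Proof.
apply/idP/eqP => [|eq_min]; first exact: block_min_eq.
have := block_min_mem z; rewrite eq_min => /(same_pblock trivIset_part).
by rewrite (same_pblock trivIset_part (block_min_mem y)) => ->; apply: mem_pblock_self.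
Qed.

Lemma card_block_mins : #|P| = #|[set y | block_min y == y]|.
Proof.
have -> : P = pblock P @: [set y | block_min y == y].
  rewrite -[LHS]pblock_imset; apply/setP=> B; apply/imsetP/imsetP => -[y _ ->].
    exists (block_min y); first by rewrite inE block_min_idem.
    exact/esym/(same_pblock trivIset_part)/block_min_mem.
  by exists y.
apply: card_in_imset => y z; rewrite !inE => /eqP ymin /eqP zmin eq_pb.
by have := mem_pblock_self z; rewrite -eq_pb mem_pblock_min ymin zmin => /eqP.
Qed.

Lemma mem_pblock_block_min (y : 'I_N) : y \in pblock P (block_min y).
Proof. by rewrite mem_pblock_min block_min_idem. Qed.

Hypothesis ncP : noncrossing P.

Lemma noncrossing_pblock (a b c d : 'I_N) : a < b -> b < c -> c < d ->
  c \in pblock P a -> d \in pblock P b -> b \in pblock P a.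
Proof.
move=> ab bc cd ca db; apply: contraT => nba.
have ne : pblock P a != pblock P b by apply: contraNneq nba => ->; apply: mem_pblock_self.
move/forall_inP: ncP => /(_ _ (pblock_mem (mem_cover_part a))).
move/forall_inP => /(_ _ (pblock_mem (mem_cover_part b))) /implyP /(_ ne).
move/forallP/(_ a)/forallP/(_ b)/forallP/(_ c)/forallP/(_ d).
by rewrite ab bc cd !mem_pblock_self ca db.
Qed.

Lemma block_min_between (y z : 'I_N) :
  block_min y <= z <= y -> block_min y <= block_min z.
Proof.
case/andP=> yz zy; rewrite leqNgt; apply/negP=> zlt.
have ne : block_min z != block_min y by rewrite -val_eqE neq_ltn zlt.
have z_min : z != block_min y :> nat.
  by apply: contraNneq ne => /val_inj ->; rewrite block_min_idem.
have z_y : z != y :> nat by apply: contraNneq ne => /val_inj ->.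
have : block_min y \in pblock P (block_min z).
  by apply: (@noncrossing_pblock _ _ z y zlt); rewrite ?mem_pblock_block_min //; lia.
by rewrite mem_pblock_min !block_min_idem eq_sym (negbTE ne).
Qed.

Lemma nested_block_ltn (y z : 'I_N) :
  block_min y < block_min z <= y -> z < y.
Proof.
case/andP=> yz zy; rewrite ltnNge; apply/negP=> le_yz.
have ne : block_min z != block_min y by rewrite -val_eqE neq_ltn yz orbT.
have min_y : block_min z != y :> nat.
  apply: contraNneq ne => /val_inj e.
  by rewrite -e block_min_idem.
have z_y : z != y :> nat by apply: contraNneq ne => /val_inj ->.
have : block_min z \in pblock P (block_min y).
  by apply: (@noncrossing_pblock _ _ y z yz); rewrite ?mem_pblock_block_min //; lia.
by rewrite mem_pblock_min !block_min_idem (negbTE ne).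
Qed.

Definition started (x : nat) := #|[set z : 'I_N | block_min z < x]|.

Lemma started_ge (x : nat) : x <= N -> x <= started x.
Proof.
move=> xN; rewrite -{1}(card_ord_lt xN); apply: subset_leq_card.
by apply/subsetP=> z; rewrite !inE; apply: leq_ltn_trans (block_min_leq_self z).
Qed.

Lemma started_N : started N = N.
Proof.
rewrite /started -[RHS]card_ord -cardsT; apply: eq_card => z.
by rewrite !inE (leq_ltn_trans (block_min_leq_self z)).
Qed.

Lemma started_block_min (y : 'I_N) :
  y.+1 + started (block_min y) <= started y.+1 + block_min y.
Proof.
have sub : [set z | block_min z < block_min y] :|: [set z : 'I_N | block_min y <= z < y.+1]
    \subset [set z | block_min z < y.+1].
  apply/subsetP=> z; rewrite !inE => /orP[zlt | /andP[_ zy]].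
    exact: leq_trans zlt (leqW (block_min_leq_self y)).
  exact: leq_ltn_trans (block_min_leq_self z) zy.
have disj : [set z | block_min z < block_min y] :&: [set z : 'I_N | block_min y <= z < y.+1]
    = set0.
  apply/setP=> z; rewrite !inE ltnS; apply/negP=> /andP[zlt /block_min_between].
  by rewrite leqNgt zlt.
have := subset_leq_card sub; rewrite cardsU disj cards0 subn0.
rewrite -/(started (block_min y)) -/(started y.+1) card_ord_itv.
  by have := block_min_leq_self y; lia.
by rewrite (leqW (block_min_leq_self y)) ltn_ord.
Qed.

Lemma started_between (y : 'I_N) (p : nat) :
  block_min y < p -> p <= y -> started y.+1 + p < y.+1 + started p.
Proof.
move=> yp py.
have sub : [set z | block_min z < y.+1] \subset
    [set z | block_min z < p] :|: ([set z : 'I_N | p <= z < y.+1] :\ y).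
  apply/subsetP=> z; rewrite !inE ltnS => zy; case: ltnP => //= pz.
  have zlty : z < y by apply: nested_block_ltn; rewrite zy (leq_trans yp pz).
  by rewrite -val_eqE (ltn_eqF zlty) (leq_trans pz (block_min_leq_self z)) ltnW.
have := cardsD1 y [set z : 'I_N | p <= z < y.+1].
rewrite inE py ltnSn card_ord_itv; last by rewrite (leqW py) ltn_ord.
have := subset_leq_card sub; rewrite cardsU.
by rewrite -/(started p) -/(started y.+1); lia.
Qed.

End BlockMin.

Section Reconstruct.
Variables (N : nat) (t : nat -> nat).

Definition psum (x : nat) := \sum_(0 <= j < x) t j.

Lemma psum0 : psum 0 = 0. Proof. by rewrite /psum big_geq. Qed.
Lemma psumS (x : nat) : psum x.+1 = psum x + t x. Proof. by rewrite /psum big_nat_recr. Qed.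

(* [t p + ... + t y >= y + 1 - p], written without subtraction. *)
Definition fills (p y : nat) := y.+1 + psum p <= psum y.+1 + p.

Definition opener (y : 'I_N) : 'I_N :=
  [arg max_(p > Ordinal (leq_ltn_trans (leq0n y) (ltn_ord y)) | (p <= y) && fills p y) val p].

Lemma fills_cat (p x y : nat) : ~~ fills p x -> ~~ fills x.+1 y -> ~~ fills p y.
Proof. by rewrite /fills; lia. Qed.

Hypothesis psum_ge : forall x, x <= N -> x <= psum x.

Lemma openerP (y : 'I_N) :
  [/\ opener y <= y, fills (opener y) y & forall p, opener y < p -> p <= y -> ~~ fills p y].
Proof.
rewrite /opener; case: arg_maxnP => [|p /andP[py fpy] pmax].
  by rewrite /= /fills psum0 !addn0 psum_ge.
split=> // q pq qy; apply: contraTN pq => fqy; rewrite -leqNgt.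
exact: (pmax (Ordinal (leq_ltn_trans qy (ltn_ord y)))) (introT andP (conj qy fqy)).
Qed.

Lemma opener_leq (y : 'I_N) : opener y <= y.
Proof. by case: (openerP y). Qed.

Lemma opener_fills (y : 'I_N) : fills (opener y) y.
Proof. by case: (openerP y). Qed.

Lemma opener_max (y : 'I_N) (p : nat) : opener y < p -> p <= y -> ~~ fills p y.
Proof. by case: (openerP y) => _ _; apply. Qed.

Lemma opener_unique (y m : 'I_N) :
  m <= y -> fills m y -> (forall p, m < p -> p <= y -> ~~ fills p y) -> m = opener y.
Proof.
move=> my fmy mmax; apply: val_inj; case: (ltngtP m (opener y)) => // lt.
  by have := mmax _ lt (opener_leq y); rewrite opener_fills.
by have := opener_max lt my; rewrite fmy.
Qed.

Lemma t_opener_gt0 (y : 'I_N) : 0 < t (opener y).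
Proof.
have := opener_fills y; have := opener_leq y; rewrite leq_eqVlt => /predU1P[eq_y | lt_y].
  by rewrite /fills eq_y !psumS; lia.
have := opener_max (ltnSn _) lt_y; rewrite /fills !psumS; lia.
Qed.

Lemma opener_id (y : 'I_N) : 0 < t y -> opener y = y.
Proof.
move=> ty; apply/esym/opener_unique => // [|p yp py]; first by rewrite /fills psumS; lia.
by have := leq_trans yp py; rewrite ltnn.
Qed.

Lemma opener_idem (y : 'I_N) : opener (opener y) = opener y.
Proof. exact/opener_id/t_opener_gt0. Qed.

Definition opened (i : 'I_N) := [set z | opener z == i].

Lemma opened0 (i : 'I_N) : opener i != i -> opened i = set0.
Proof.
move=> ne; apply/setP=> z; rewrite !inE; apply/negbTE; apply: contra ne => /eqP <-.
by rewrite opener_idem.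
Qed.

Lemma card_opened_leq (i : 'I_N) : #|opened i| <= t i.
Proof.
have [oi | ?] := eqVneq (opener i) i; last by rewrite opened0 ?cards0.
have ti : 0 < t i by rewrite -oi t_opener_gt0.
rewrite (cardsD1 i) inE oi eqxx add1n -(prednK ti) ltnS.
have zP z : z \in opened i :\ i ->
    [/\ i < z, fills i z & forall p, i < p -> p <= z -> ~~ fills p z].
  rewrite !inE => /andP[zi /eqP oz]; rewrite -oz; split; [|exact: opener_fills|exact: opener_max].
  rewrite ltn_neqAle opener_leq andbT; apply: contraNneq zi => /val_inj e.
  by rewrite -oz e.
(* The slack of [fills i z] strictly decreases along [opened i], and [~~ fills i.+1 z]
   bounds it by [t i - 1]. *)
pose slack (z : 'I_N) := psum z.+1 + i - z.+1 - psum i.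
apply: (@card_in_inj_leq _ _ slack) => [z1 z2 z1i z2i e | z zi].
  have [lt1 f1 max1] := zP _ z1i; have [lt2 f2 max2] := zP _ z2i.
  apply/val_inj/eqP; case: ltngtP => // lt.
    by have := max2 z1.+1 (ltnW lt1) lt; move: e f1 f2; rewrite /slack /fills; lia.
  by have := max1 z2.+1 (ltnW lt2) lt; move: e f1 f2; rewrite /slack /fills; lia.
have [lt fz maxz] := zP _ zi; have := maxz i.+1 (ltnSn i) lt.
by move: fz; rewrite /slack /fills !psumS; lia.
Qed.

Lemma opener_nested (x y : 'I_N) : x < y -> opener x < opener y -> x < opener y.
Proof.
move=> xy oxy; rewrite ltnNge; apply/negP=> oyx; apply/negP: (opener_fills y).
by apply: (@fills_cat _ x); apply: opener_max; rewrite ?ltnS.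
Qed.

Definition seq_partition := preim_partition opener [set: 'I_N].

Lemma seq_partitionP : partition seq_partition [set: 'I_N].
Proof. exact: preim_partitionP. Qed.

Lemma mem_pblock_seq_partition (y z : 'I_N) :
  (z \in pblock seq_partition y) = (opener y == opener z).
Proof.
by rewrite pblock_equivalence_partition ?inE // => a b c _ _ _; split=> // /eqP ->.
Qed.

Lemma pblock_seq_partition (y : 'I_N) : pblock seq_partition y = opened (opener y).
Proof. by apply/setP=> z; rewrite mem_pblock_seq_partition inE eq_sym. Qed.

Lemma block_min_seq_partition (y : 'I_N) : block_min seq_partition y = opener y.
Proof.
have oy : opener y \in pblock seq_partition y by rewrite mem_pblock_seq_partition opener_idem.
apply/val_inj/eqP; rewrite eqn_leq (block_min_leq seq_partitionP oy) /=.
have := block_min_mem seq_partitionP y; rewrite mem_pblock_seq_partition => /eqP ->.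
exact: opener_leq.
Qed.

Lemma seq_partition_noncrossing : noncrossing seq_partition.
Proof.
apply/forall_inP=> B BP; apply/forall_inP=> B' BP'; apply/implyP=> neB.
apply/forallP=> a; apply/forallP=> b; apply/forallP=> c; apply/forallP=> d.
apply/implyP=> /and3P[ab bc cd]; apply/negP=> /and4P[aB cB bB dB].
have pbE := def_pblock (trivIset_part seq_partitionP).
have /eqP oac : opener a == opener c by rewrite -mem_pblock_seq_partition (pbE _ _ BP aB).
have /eqP obd : opener b == opener d by rewrite -mem_pblock_seq_partition (pbE _ _ BP' bB).
have neo : opener a != opener b :> nat.
  apply: contraNneq neB => /val_inj oab; rewrite -(pbE _ _ BP aB) -(pbE _ _ BP' bB).
  by apply/eqP/setP=> z; rewrite !mem_pblock_seq_partition oab.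
have := opener_leq a; have := opener_leq b.
case: (ltngtP (opener a) (opener b)) neo => // [lt | gt] _.
  by have := opener_nested cd; rewrite -oac -obd => /(_ lt); lia.
by have := opener_nested bc; rewrite -oac => /(_ gt); lia.
Qed.

Hypothesis psum_N : psum N = N.

Lemma card_opened (i : 'I_N) : #|opened i| = t i.
Proof.
have sum_opened : \sum_(j < N) #|opened j| = \sum_(j < N) t j.
  transitivity N; last by rewrite -[LHS]psum_N /psum big_mkord.
  transitivity (\sum_(z : 'I_N) 1); last by rewrite sum1_card card_ord.
  rewrite [RHS](partition_big opener predT) //=; apply: eq_bigr => j _.
  by rewrite -sum1_card; apply: eq_bigl => z; rewrite inE.
have /leqif_sum := fun j (_ : predT j) => leqif_eq (card_opened_leq j).
by move=> -[_] /=; rewrite sum_opened eqxx => /esym/forallP/(_ i)/eqP.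
Qed.

Lemma t_not_opener (i : 'I_N) : opener i != i -> t i = 0.
Proof. by move=> ne; rewrite -card_opened opened0 ?cards0. Qed.

End Reconstruct.

Lemma eq_partition_pblock (N : nat) (P1 P2 : {set {set 'I_N}}) :
  partition P1 [set: 'I_N] -> partition P2 [set: 'I_N] -> pblock P1 =1 pblock P2 -> P1 = P2.
Proof.
move=> part1 part2 eq_pb.
by rewrite -(pblock_imset part1) -(pblock_imset part2) (eq_imset _ eq_pb).
Qed.

Lemma eq_psum (t1 t2 : nat -> nat) : t1 =1 t2 -> psum t1 =1 psum t2.
Proof. by move=> eq_t x; apply: eq_bigr. Qed.

Section BlockSizes.
Variables (N : nat) (P : {set {set 'I_N}}).

Definition block_sizes (j : nat) : nat :=
  if insub j is Some y then (if block_min P y == y then #|pblock P y| else 0) else 0.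

Lemma block_sizes_ord (y : 'I_N) :
  block_sizes y = if block_min P y == y then #|pblock P y| else 0.
Proof. by rewrite /block_sizes valK. Qed.

Lemma block_sizes_out (j : nat) : N <= j -> block_sizes j = 0.
Proof. by move=> Nj; rewrite /block_sizes insubN // -leqNgt. Qed.

Lemma block_sizes_leq (j : nat) : block_sizes j <= N.
Proof.
rewrite /block_sizes; case: insub => // y; case: ifP => // _.
by rewrite -[X in _ <= X]card_ord max_card.
Qed.

Hypotheses (partP : partition P [set: 'I_N]) (ncP : noncrossing P).

Lemma block_sizes_gt0 (y : 'I_N) : (0 < block_sizes y) = (block_min P y == y).
Proof.
rewrite block_sizes_ord; case: eqP => // _.
by rewrite card_gt0; apply/set0Pn; exists y; apply: mem_pblock_self.
Qed.

Lemma psum_block_sizes (x : nat) : x <= N -> psum block_sizes x = started P x.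
Proof.
elim: x => [|x IH] xN.
  by rewrite psum0 /started; apply/esym/eqP; rewrite cards_eq0; apply/eqP/setP=> z; rewrite !inE.
rewrite psumS IH ?(ltnW xN) // /started.
have -> : [set z | block_min P z < x.+1] =
    [set z | block_min P z < x] :|: [set z | block_min P z == x :> nat].
  by apply/setP=> z; rewrite !inE ltnS leq_eqVlt orbC.
rewrite cardsU (_ : _ :&: _ = set0) ?cards0 ?subn0; last first.
  by apply/setP=> z; rewrite !inE; case: ltngtP.
congr (_ + _); rewrite (_ : x = Ordinal xN) // block_sizes_ord.
case: eqP => [min_x | ne].
  by apply: eq_card => z; rewrite inE (mem_pblock_min partP) min_x -val_eqE.
apply/esym/eqP; rewrite cards_eq0; apply/eqP/setP=> z; rewrite !inE.
apply/negP=> /eqP e; apply: ne; rewrite (_ : Ordinal xN = block_min P z); last exact: val_inj.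
exact: block_min_idem.
Qed.

Lemma psum_block_sizes_ge (x : nat) : x <= N -> x <= psum block_sizes x.
Proof. by move=> xN; rewrite psum_block_sizes // started_ge. Qed.

Lemma psum_block_sizes_N : psum block_sizes N = N.
Proof. by rewrite psum_block_sizes // started_N. Qed.

Lemma block_min_opener (t : nat -> nat) : t =1 block_sizes -> block_min P =1 opener t.
Proof.
move=> eq_t y; have psumE x : x <= N -> psum t x = started P x.
  by move=> xN; rewrite (eq_psum eq_t) psum_block_sizes.
have yN : y < N := ltn_ord y.
apply: opener_unique => [x xN|||p yp py].
- by rewrite psumE // started_ge.
- exact: block_min_leq_self.
- rewrite /fills !psumE //; first exact: started_block_min.
  exact: leq_trans (block_min_leq_self partP y) (ltnW yN).
rewrite /fills !psumE // -?ltnNge; last exact: leq_trans py (ltnW yN).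
exact: started_between yp py.
Qed.

Lemma seq_partition_block_sizes (t : nat -> nat) : t =1 block_sizes -> seq_partition N t = P.
Proof.
move=> eq_t; apply: eq_partition_pblock (seq_partitionP _ _) partP _ => y.
apply/setP=> z; rewrite mem_pblock_seq_partition (mem_pblock_min partP).
by rewrite -!(block_min_opener eq_t) eq_sym.
Qed.

End BlockSizes.

Section Encoding.
Variable N : nat.
Implicit Types (u : {ffun 'I_N.+1 -> 'I_N.+1}) (P : {set {set 'I_N}}).

Definition vals u (j : nat) : nat := if insub j is Some y then val (u y) else 0.

Lemma vals_ord u (j : 'I_N.+1) : vals u j = u j.
Proof. by rewrite /vals valK. Qed.

Lemma vals_out u (j : nat) : N.+1 <= j -> vals u j = 0.
Proof. by move=> Nj; rewrite /vals insubN // -leqNgt. Qed.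

Lemma psum_vals u : psum (vals u) N.+1 = \sum_j (u j : nat).
Proof. by rewrite /psum big_mkord; apply: eq_bigr => j _; rewrite vals_ord. Qed.

Definition lukasiewicz u :=
  (psum (vals u) N.+1 == N) && [forall x : 'I_N.+1, x <= psum (vals u) x].

Definition dvd_entries (k : nat) u := [forall j, k %| u j].

Definition nnz u := #|[set j | 0 < u j]|.

Definition nc_dvd (k : nat) P :=
  [&& partition P [set: 'I_N], noncrossing P & [forall B in P, k %| #|B|]].

Definition encode P : {ffun 'I_N.+1 -> 'I_N.+1} := [ffun j : 'I_N.+1 => inord (block_sizes P j)].

Definition decode u := seq_partition N (vals u).

Lemma vals_encode P : vals (encode P) =1 block_sizes P.
Proof.
move=> j; case: (ltnP j N.+1) => [jN | Nj]; last by rewrite vals_out // block_sizes_out // ltnW.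
by rewrite (_ : j = Ordinal jN) // vals_ord ffunE inordK // ltnS block_sizes_leq.
Qed.

Section NoncrossingPartition.
Variable P : {set {set 'I_N}}.
Hypotheses (partP : partition P [set: 'I_N]) (ncP : noncrossing P).

Lemma encodeK : decode (encode P) = P.
Proof. exact/seq_partition_block_sizes/vals_encode. Qed.

Lemma encode_lukasiewicz : lukasiewicz (encode P).
Proof.
rewrite /lukasiewicz !(eq_psum (vals_encode P)) psumS psum_block_sizes_N //.
rewrite block_sizes_out // addn0 eqxx; apply/forallP=> x.
by rewrite (eq_psum (vals_encode P)) psum_block_sizes_ge // -ltnS.
Qed.

Lemma card_nnz_encode : #|P| = nnz (encode P).
Proof.
have widen_inj : injective (widen_ord (leqnSn N)) by move=> a b [/val_inj].
rewrite (card_block_mins partP) /nnz -(card_imset _ widen_inj); apply: eq_card => j.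
rewrite inE -vals_ord vals_encode; apply/imsetP/idP => [[y ymin ->] /= | pos].
  by move: ymin; rewrite inE (block_sizes_gt0 partP).
have jN : j < N by rewrite ltnNge; apply: contraTN pos => /block_sizes_out ->.
by exists (Ordinal jN); [rewrite inE -(block_sizes_gt0 partP) | apply: val_inj].
Qed.

Lemma encode_dvd (k : nat) : [forall B in P, k %| #|B|] -> dvd_entries k (encode P).
Proof.
move=> /forall_inP dvdB; apply/forallP=> j; rewrite -vals_ord vals_encode /block_sizes.
case: insub => // y; case: ifP => // _.
exact/dvdB/pblock_mem/mem_cover_part.
Qed.

End NoncrossingPartition.

Section LukasiewiczWord.
Variable u : {ffun 'I_N.+1 -> 'I_N.+1}.
Hypothesis luka_u : lukasiewicz u.

Lemma psum_vals_ge (x : nat) : x <= N -> x <= psum (vals u) x.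
Proof. by move=> xN; case/andP: luka_u => _ /forallP /(_ (Ordinal (xN : x < N.+1))). Qed.

Lemma psum_vals_N : psum (vals u) N = N.
Proof. by have := psum_vals_ge (leqnn N); case/andP: luka_u => /eqP; rewrite psumS; lia. Qed.

Lemma vals_N : vals u N = 0.
Proof. by have := psum_vals_ge (leqnn N); case/andP: luka_u => /eqP; rewrite psumS; lia. Qed.

Lemma card_pblock_decode (y : 'I_N) : #|pblock (decode u) y| = vals u (opener (vals u) y).
Proof. by rewrite pblock_seq_partition (card_opened psum_vals_ge psum_vals_N). Qed.

Lemma decode_nc_dvd (k : nat) : dvd_entries k u -> nc_dvd k (decode u).
Proof.
move=> /forallP dvd_u; rewrite /nc_dvd seq_partitionP (seq_partition_noncrossing psum_vals_ge) /=.
apply/forall_inP=> B BP; have /set0Pn[y yB] : B != set0.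
  by apply: contraTneq BP => ->; case/and3P: (seq_partitionP N (vals u)).
rewrite -(def_pblock (trivIset_part (seq_partitionP _ _)) BP yB) card_pblock_decode.
by rewrite (_ : val (opener _ y) = Ordinal (leqW (ltn_ord (opener (vals u) y)))) // vals_ord.
Qed.

Lemma decodeK : encode (decode u) = u.
Proof.
apply/ffunP=> j; apply: val_inj => /=; rewrite ffunE inordK ?ltnS ?block_sizes_leq // -vals_ord.
case: (ltnP j N) => [jN | Nj]; last first.
  have -> : (j : nat) = N by apply/eqP; rewrite eqn_leq Nj -ltnS ltn_ord.
  by rewrite block_sizes_out ?vals_N.
rewrite (_ : (j : nat) = Ordinal jN) // block_sizes_ord (block_min_seq_partition psum_vals_ge).
case: eqP => [oj | /eqP ne]; first by rewrite card_pblock_decode oj.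
by rewrite (t_not_opener psum_vals_ge psum_vals_N ne).
Qed.

End LukasiewiczWord.

Lemma sum_card_nc_dvd (k : nat) :
  \sum_(P | nc_dvd k P) #|P| = \sum_(u | lukasiewicz u && dvd_entries k u) nnz u.
Proof.
rewrite (reindex_onto encode decode) => [|u /andP[lu _]]; last exact: decodeK.
apply: eq_big => [P | P /and3P[partP ncP _]]; last by rewrite card_nnz_encode.
apply/idP/idP => [/and3P[partP ncP dvdP] | /andP[/andP[lu du] /eqP <-]].
  by rewrite encode_lukasiewicz // encode_dvd // encodeK ?eqxx.
exact: decode_nc_dvd.
Qed.

End Encoding.

Section Rotation.
Variable N : nat.
Local Notation M := N.+1.
Implicit Types (v : {ffun 'I_M -> 'I_M}).

Definition rotate v (r : nat) : {ffun 'I_M -> 'I_M} :=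
  [ffun j : 'I_M => v (inord ((j + r) %% M))].

Lemma rotate_rotate v (r s : nat) : rotate (rotate v r) s = rotate v (s + r).
Proof. by apply/ffunP=> j; rewrite !ffunE inordK ?ltn_pmod // modnDml addnA. Qed.

Lemma rotate_mod v (r : nat) : rotate v (r %% M) = rotate v r.
Proof. by apply/ffunP=> j; rewrite !ffunE modnDmr. Qed.

Lemma rotate0 v : rotate v 0 = v.
Proof. by apply/ffunP=> j; rewrite ffunE addn0 modn_small // inord_val. Qed.

Lemma rotate_dvd_entries (k : nat) v (r : nat) : dvd_entries k v -> dvd_entries k (rotate v r).
Proof. by move/forallP=> dvd_v; apply/forallP=> j; rewrite ffunE. Qed.

Lemma vals_rotate v (r j : nat) : j < M -> vals (rotate v r) j = vals v ((j + r) %% M).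
Proof.
move=> jM; rewrite -[in LHS](inordK jM) vals_ord ffunE.
by rewrite -[in RHS](inordK (ltn_pmod (j + r) (ltn0Sn N))) vals_ord inordK.
Qed.

Lemma psum_rotate v (r x : nat) : r < M -> x <= M ->
  psum (vals (rotate v r)) x + psum (vals v) r =
  if r + x <= M then psum (vals v) (r + x) else psum (vals v) M + psum (vals v) (r + x - M).
Proof.
move=> rM; elim: x => [|x IH] xM; first by rewrite psum0 add0n addn0 ltnW.
have {}IH := IH (ltnW xM).
rewrite [psum _ x.+1]psumS vals_rotate // [x + r]addnC addnS.
case: (ltngtP (r + x) M) => [lt | gt | eq].
- by move: IH; rewrite (ltnW lt) modn_small // [psum _ (r + x).+1]psumS; lia.
- move: IH; rewrite (ltn_geF gt) modn_subn; last lia.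
  by rewrite subSn ?(ltnW gt) // [psum _ (r + x - M).+1]psumS; lia.
by move: IH; rewrite eq leqnn modnn subSnn [psum _ 1]psumS psum0; lia.
Qed.

Lemma psum_rotate_M v (r : nat) : r < M -> psum (vals (rotate v r)) M = psum (vals v) M.
Proof.
move=> rM; have := psum_rotate v rM (leqnn M); case: ifP => [|_].
  by rewrite -{2}[M]add0n leq_add2r leqn0 => /eqP ->; rewrite psum0 addn0 add0n.
by rewrite addnK => /eqP; rewrite eqn_add2r => /eqP.
Qed.

Lemma lukasiewicz_rotate_uniq v (r1 r2 : nat) : psum (vals v) M = N -> r1 < M -> r2 < M ->
  lukasiewicz (rotate v r1) -> lukasiewicz (rotate v r2) -> r1 = r2.
Proof.
move=> vN; wlog lt : r1 r2 / r1 < r2.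
  move=> W r1M r2M l1 l2; case: (ltngtP r1 r2) => [lt|gt|//]; first exact: W.
  exact/esym/W.
move=> r1M r2M /andP[_ /forallP l1] /andP[_ /forallP l2].
have x1 : r2 - r1 < M by lia.
have := l1 (Ordinal x1); have := psum_rotate v r1M (ltnW x1); rewrite /= subnKC ?(ltnW lt) //.
rewrite ltnW // => E1 i1.
have x2 : M - r2 + r1 < M by lia.
have := l2 (Ordinal x2); have := psum_rotate v r2M (ltnW x2); rewrite /=.
case: ifP => h.
  have r10 : r1 = 0 by lia.
  subst r1; rewrite (_ : r2 + (M - r2 + 0) = M); last lia.
  by move: E1; rewrite psum0 vN; lia.
rewrite (_ : r2 + (M - r2 + r1) - M = r1); last lia.
by rewrite vN; lia.
Qed.

Lemma lukasiewicz_rotate_exists v :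
  psum (vals v) M = N -> exists2 r, r < M & lukasiewicz (rotate v r).
Proof.
move=> vN.
(* [r] is the first position where [psum y - y] attains its minimum. *)
pose F (y : nat) := psum (vals v) y + M - y.
pose r := [arg min_(y < (ord0 : 'I_M)) (F y * M + y)].
have rmin (y : 'I_M) : F r * M + r <= F y * M + y.
  by rewrite /r; case: arg_minnP => // i _; apply.
have Fmin (y : 'I_M) : F r <= F y.
  rewrite leqNgt; apply/negP=> lt; have := rmin y.
  have := leq_mul lt (leqnn M); rewrite mulSn; have := ltn_ord y; lia.
have Ffirst (y : 'I_M) : y < r -> F r < F y.
  move=> yr; rewrite ltn_neqAle Fmin andbT; apply/negP=> /eqP e.
  by have := rmin y; rewrite e; lia.
exists r => //; apply/andP; split; first by rewrite psum_rotate_M // vN.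
apply/forallP=> x; have xM := ltn_ord x; have rM := ltn_ord r.
have := psum_rotate v rM (ltnW xM); case: ifP => h.
  case: (ltnP (r + x) M) => h'.
    by have := Fmin (Ordinal h'); rewrite /F /=; lia.
  have r0 : 0 < r by lia.
  by have := Ffirst ord0 r0; rewrite /F /= psum0 (_ : r + x = M) ?vN; lia.
have y1 : r + x - M < M by lia.
by have := Ffirst (Ordinal y1); rewrite /F /= vN => /(_ _); lia.
Qed.

Lemma rotateK v (r : nat) : r <= M -> rotate (rotate v r) (M - r) = v.
Proof. by move=> rM; rewrite rotate_rotate subnK // -rotate_mod modnn rotate0. Qed.

Definition marked (k : nat) := [set p : {ffun 'I_M -> 'I_M} * 'I_M |
  [&& lukasiewicz p.1, dvd_entries k p.1 & 0 < p.1 p.2]].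

Definition pointed (k : nat) := [set v : {ffun 'I_M -> 'I_M} |
  [&& psum (vals v) M == N, dvd_entries k v & 0 < v ord0]].

Lemma card_marked (k : nat) : #|marked k| = #|pointed k|.
Proof.
pose h (p : {ffun 'I_M -> 'I_M} * 'I_M) := rotate p.1 p.2.
have h_inj : {in marked k &, injective h}.
  move=> [u i] [u' i']; rewrite !inE /h /= => /and3P[lu _ _] /and3P[lu' _ _] e.
  have iM := ltnW (ltn_ord i); have i'M := ltnW (ltn_ord i').
  have vN : psum (vals (rotate u i)) M = N by rewrite psum_rotate_M //; case/andP: lu => /eqP.
  have := lukasiewicz_rotate_uniq vN (ltn_pmod (M - i) (ltn0Sn N)) (ltn_pmod (M - i') (ltn0Sn N)).
  rewrite !rotate_mod rotateK // e rotateK // => /(_ lu lu').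
  rewrite !modn_compl // => E.
  have ii : i = i' by apply: val_inj => /=; move: (ltn_ord i) (ltn_ord i') E; do 2!case: eqP; lia.
  by subst i'; rewrite -[u](rotateK _ iM) e rotateK.
rewrite -(card_in_imset h_inj); apply: eq_card => v; apply/imsetP/idP.
  case=> -[u i]; rewrite !inE /h /= => /and3P[lu du ui] ->.
  move: lu => /andP[/eqP uN _]; rewrite psum_rotate_M // uN eqxx rotate_dvd_entries //=.
  by rewrite ffunE add0n modn_small // inord_val.
rewrite inE => /and3P[/eqP vN dv v0]; have [r rM lr] := lukasiewicz_rotate_exists vN.
have i_ord : (M - r) %% M < M by apply: ltn_pmod.
exists (rotate v r, Ordinal i_ord); last first.
  by rewrite /h /= rotate_mod rotateK // ltnW.
rewrite inE /= lr rotate_dvd_entries //= ffunE /= modnDml subnK ?(ltnW rM) // modnn.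
by rewrite (_ : inord 0 = ord0) //; apply: val_inj; rewrite /= inordK.
Qed.

Lemma sum_nnz_lukasiewicz (k : nat) :
  \sum_(u : {ffun 'I_M -> 'I_M} | lukasiewicz u && dvd_entries k u) nnz u = #|pointed k|.
Proof.
rewrite -card_marked -sum1_card.
rewrite (eq_bigr (fun u : {ffun 'I_M -> 'I_M} => \sum_(j | 0 < u j) 1)) => [|u _]; last first.
  by rewrite sum1_card /nnz cardsE.
by rewrite pair_big_dep /=; apply: eq_bigl => p; rewrite inE andbA.
Qed.

End Rotation.

Section Compositions.
Variables (k n : nat).
Hypothesis k_gt0 : 0 < k.
Local Notation N := (k * n.+1).

Definition scale (w : N.+1.-tuple 'I_n.+1) : {ffun 'I_N.+1 -> 'I_N.+1} :=
  [ffun j => inord (k * (tnth w j + (j == ord0)))].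

Lemma val_scale w (j : 'I_N.+1) : scale w j = k * (tnth w j + (j == ord0)) :> nat.
Proof.
rewrite ffunE inordK // ltnS leq_mul2l; apply/orP; right.
by have := ltn_ord (tnth w j); case: (_ == _) => /=; lia.
Qed.

Lemma scale_inj : injective scale.
Proof.
move=> w w' e; apply: eq_from_tnth => j; apply: val_inj.
have /eqP := congr1 (fun f : {ffun 'I_N.+1 -> 'I_N.+1} => val (f j)) e; rewrite /= !val_scale.
by rewrite eqn_mul2l gtn_eqF //= eqn_add2r => /eqP.
Qed.

Lemma sum_scale w : \sum_j (scale w j : nat) = k * (\sum_(i <- w) i + 1).
Proof.
by rewrite big_tuple (eq_bigr _ (fun j _ => val_scale w j)) -big_distrr big_split sum_eq_ord0.
Qed.

Lemma pointed_scale : pointed N k = scale @: [set w : N.+1.-tuple 'I_n.+1 | \sum_(i <- w) i == n].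
Proof.
apply/setP=> v; rewrite inE; apply/idP/imsetP => [/and3P[/eqP vN /forallP dv v0] | [w]].
  pose q (j : 'I_N.+1) := v j %/ k - (j == ord0).
  have qE j : k * (q j + (j == ord0)) = v j.
    rewrite /q; case: (eqVneq j ord0) => [-> | _]; last first.
      by have /dvdnP[c ->] := dv j; rewrite mulnK // subn0 addn0 mulnC.
    have /dvdnP[c vc] := dv ord0; move: v0; rewrite vc mulnK // muln_gt0 => /andP[c0 _].
    by rewrite subnK // mulnC.
  have sum_q : \sum_j q j = n.
    apply/eqP; rewrite -(eqn_add2r 1) -(eqn_pmul2l k_gt0) [n + 1]addn1 -[X in _ == X]vN psum_vals.
    by rewrite -(eq_bigr _ (fun j _ => qE j)) -big_distrr big_split sum_eq_ord0.
  have q_le j : q j < n.+1 by rewrite ltnS -sum_q (bigD1 j) //= leq_addr.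
  exists [tuple Ordinal (q_le j) | j < N.+1].
    rewrite inE big_tuple; apply/eqP; rewrite -[RHS]sum_q; apply: eq_bigr => j _.
    by rewrite tnth_mktuple.
  by apply/ffunP=> j; apply: val_inj => /=; rewrite val_scale tnth_mktuple /= qE.
rewrite inE => /eqP sum_w ->; rewrite psum_vals sum_scale sum_w addn1 eqxx /=.
apply/andP; split; first by apply/forallP=> j; rewrite val_scale dvdn_mulr.
by rewrite val_scale muln_gt0 k_gt0 addn1.
Qed.

Lemma card_pointed : #|pointed N k| = 'C(N + n, N).
Proof. by rewrite pointed_scale card_imset; [apply: card_ord_partitions | apply: scale_inj]. Qed.

End Compositions.

Theorem corollary2p4 (k n : nat) (hk : 0 < k) (hn : 0 < n) :
  \sum_(P : {set {set 'I_(k * n)}} | NCk P) #|P| = 'C(n * (k + 1) - 1, n * k).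
Proof.
case: n hn => // n _.
rewrite (eq_bigl (nc_dvd k)) // sum_card_nc_dvd sum_nnz_lukasiewicz card_pointed //.
by congr 'C(_, _); lia.
Qed.
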